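(* Let $V_6=(\mathbb{P}^1)^3$ with coordinates $[u_i:v_i]$, let $\tau$ be the involution $([u_1:v_1],[u_2:v_2],[u_3:v_3])\mapsto([u_1:-v_1],[u_2:-v_2],[u_3:-v_3])$, and let $X_{24}=V_6/\tau$, a toric variety for the torus $\mathbb{T}_3=(\mathbb{C}^* )^3/\{\pm(1,1,1)\}$ with the action induced from the diagonal action $[u_i:v_i]\mapsto[t_iu_i:v_i]$ of $(\mathbb{C}^* )^3$ on $V_6$. Let $G_{X_{24}}$ be the group of automorphisms of $X_{24}$ induced by the group generated by $(\mathbb{C}^* )^3$, the permutations of the three factors of $V_6$, and the involutions $\upsilon\times\upsilon\times\mathrm{id}$, $\upsilon\times\mathrm{id}\times\upsilon$, $\upsilon\times\upsilon\times\upsilon$, where $\upsilon([u:v])=[v:u]$ (all of which commute with $\tau$ or normalize $\langle\tau\rangle$). Let $\mathbb{W}_3^{\mathfrak{A}}\cong\mathfrak{A}_4$ be the image in $G_{X_{24}}$ of the group generated by the cyclic permutations of the factors and $\upsilon\times\upsilon\times\mathrm{id}$, $\upsilon\times\mathrm{id}\times\upsilon$. If $G$ is a subgroup of $G_{X_{24}}$ containing $\mathbb{W}_3^{\mathfrak{A}}$, then $\mathrm{rk}\,\mathrm{Cl}(X_{24})^G=1$.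
   Context: $G_{X_{24}}$ is the normalizer of the maximal torus $\mathbb{T}_3$ in $\mathrm{Aut}(X_{24})$; $X_{24}$ is a terminal toric Fano threefold with eight singular points of type $\frac12(1,1,1)$. $\mathrm{Cl}(X_{24})^G$ is the $G$-invariant part of the divisor class group. *)

From mathcomp Require Import all_boot all_order all_algebra all_fingroup.
From mathcomp Require Import complex.
From mathcomp Require Import Rstruct.
Set Implicit Arguments. Unset Strict Implicit. Unset Printing Implicit Defensive.
Import Order.TTheory GRing.Theory Num.Theory.
Local Open Scope ring_scope.

Definition CC : Type := complex Rdefinitions.R.

(* V_6 = (P^1)^3.  A factor map of P^1 with parameters (t, b):
     b = false :  [u:v] |-> [t u : v]
     b = true  :  [u:v] |-> [t v : u]      (= diag(t,1) o upsilon)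
   An element (s, t, b) of the group hat G generated by (C^* )^3, the
   permutations of the factors and the upsilon's maps the i-th factor to the
   (s i)-th factor via the factor map with parameters (t i, b i), i.e.
     g(x)_{s i} = f_{t i, b i}(x_i).                                       *)
Record GXhat := MkGX { gperm : {perm 'I_3}; gtor : 'I_3 -> CC; gflip : 'I_3 -> bool }.

(* f_{t,b} o f_{s,c} = f_{t * s^(b ? -1 : 1), b xor c} *)
Definition gmul (g h : GXhat) : GXhat :=
  MkGX (gperm h * gperm g)%g
       (fun i => gtor g (gperm h i) * (if gflip g (gperm h i) then (gtor h i)^-1 else gtor h i))
       (fun i => gflip g (gperm h i) (+) gflip h i).

(* f_{t,false}^-1 = f_{t^-1,false},  f_{t,true}^-1 = f_{t,true} *)
Definition ginv (g : GXhat) : GXhat :=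
  MkGX (gperm g)^-1%g
       (fun k => let j := ((gperm g)^-1)%g k in
                 if gflip g j then gtor g j else (gtor g j)^-1)
       (fun k => gflip g (((gperm g)^-1)%g k)).

Definition gone : GXhat := MkGX 1%g (fun _ => 1) (fun _ => false).

(* tau = (-1,-1,-1) in the torus: generates the kernel of hat G -> G_{X_24}. *)
Definition gtau : GXhat := MkGX 1%g (fun _ => -1) (fun _ => false).

Definition cyc3 : {perm 'I_3} := perm (@ordS_inj 3).   (* i |-> i+1 mod 3 *)
Definition gcyc : GXhat := MkGX cyc3 (fun _ => 1) (fun _ => false).
Definition ups_pair (k : 'I_3) : GXhat := MkGX 1%g (fun _ => 1) (fun i => i != k).
(* ups_pair 2 = upsilon x upsilon x id,  ups_pair 1 = upsilon x id x upsilon *)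

(* A subgroup of G_{X_24} = hat G / <tau> is encoded by its preimage S in hat G:
   a predicate of genuine group elements (nonzero torus parameters) that
   contains 1 and tau and is closed under product and inverse. *)
Definition preimage_subgroup (S : GXhat -> Prop) : Prop :=
  [/\ forall g, S g -> forall i, gtor g i != 0,
      S gone, S gtau,
      forall g h, S g -> S h -> S (gmul g h)
    & forall g, S g -> S (ginv g)].

Definition contains_WA (S : GXhat -> Prop) : Prop :=
  [/\ S gcyc, S (ups_pair (inord 2)) & S (ups_pair (inord 1))].

(* Divisors.  The T-invariant prime divisors of X_24 are the images of
   {u_i = 0} (index (i,false)) and {v_i = 0} (index (i,true)).
   Weil divisors supported on them: functions 'I_3 -> bool -> int.        *)
Definition divisor := 'I_3 -> bool -> int.

(* Principal T-invariant divisors: div(chi^m) for characters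
   chi^m = prod_i (u_i/v_i)^(m_i) of the torus T_3 = (C^* )^3/{+-1},
   i.e. m in Z^3 with sum m_i even (the tau-invariant characters). *)
Definition principal (D : divisor) : Prop :=
  exists m : 'I_3 -> int, (2 %| \sum_(i < 3) m i)%Z /\
    forall i c, D i c = (if c then - m i else m i).

Definition lin_equiv (D D' : divisor) : Prop := principal (fun i c => D i c - D' i c).

(* push-forward g_* : g maps {u_i=0} to {u_(s i) = 0} if b i = false and to
   {v_(s i) = 0} if b i = true (and symmetrically for {v_i = 0}). *)
Definition push (g : GXhat) (D : divisor) : divisor :=
  fun j d => let i := ((gperm g)^-1)%g j in D i (d (+) gflip g i).

Definition invariant_class (S : GXhat -> Prop) (D : divisor) : Prop :=
  forall g, S g -> lin_equiv (push g D) D.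

Definition cl_independent (k : nat) (F : 'I_k -> divisor) : Prop :=
  forall n : 'I_k -> int,
    principal (fun i c => \sum_(j < k) n j * F j i c) -> forall j, n j = 0.

Definition rank_Cl_inv (S : GXhat -> Prop) (r : nat) : Prop :=
  (exists F : 'I_r -> divisor, (forall j, invariant_class S (F j)) /\ cl_independent F) /\
  (forall F : 'I_r.+1 -> divisor, (forall j, invariant_class S (F j)) -> ~ cl_independent F).

(** The degree of a divisor on each of the three factors of (P^1)^3 kills
    principal divisors, and a divisor of degree zero on every factor is
    2-torsion in Cl(X_24); hence Cl(X_24) has rank 3, detected by the three
    degrees.  A class fixed by the cyclic permutation of the factors has
    equal degrees, so two invariant classes are always dependent, while the
    anticanonical class is invariant under all of G_{X_24} and has infinite
    order. *)

From mathcomp Require Import all_boot all_order all_algebra all_fingroup.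
Set Implicit Arguments. Unset Strict Implicit. Unset Printing Implicit Defensive.
Import GRing.Theory.
Local Open Scope ring_scope.

Definition factor_degree (D : divisor) (i : 'I_3) : int := D i false + D i true.

Definition anticanonical : divisor := fun _ _ => 1.

Lemma eq_principal (D D' : divisor) :
  (forall i c, D i c = D' i c) -> principal D -> principal D'.
Proof. by move=> eqDD' [m [m_even Dm]]; exists m; split=> // i c; rewrite -eqDD'. Qed.

Lemma factor_degree_principal (D : divisor) i :
  principal D -> factor_degree D i = 0.
Proof. by case=> m [_ Dm]; rewrite /factor_degree !Dm subrr. Qed.

Lemma factor_degree_lin_equiv (D D' : divisor) i :
  lin_equiv D D' -> factor_degree D i = factor_degree D' i.
Proof.
move/(factor_degree_principal i); rewrite /factor_degree => /eqP.
by rewrite addrACA -opprD subr_eq0 => /eqP.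
Qed.

Lemma factor_degree_push (g : GXhat) (D : divisor) i :
  factor_degree (push g D) (gperm g i) = factor_degree D i.
Proof. by rewrite /factor_degree /push permK; case: (gflip g i) => //=; rewrite addrC. Qed.

Lemma factor_degree_sum k (n : 'I_k -> int) (F : 'I_k -> divisor) i :
  factor_degree (fun i c => \sum_(j < k) n j * F j i c) i
  = \sum_(j < k) n j * factor_degree (F j) i.
Proof. by rewrite /factor_degree -big_split; apply: eq_bigr => j _; rewrite mulrDr. Qed.

Lemma principal_double_of_factor_degree0 (D : divisor) :
  (forall i, factor_degree D i = 0) -> principal (fun i c => 2 * D i c).
Proof.
move=> D0; exists (fun i => 2 * D i false); split; first by rewrite -big_distrr dvdz_mulr.
by move=> i [] //=; rewrite -(addr0_eq (D0 i)) mulrN.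
Qed.

Lemma cl_dependent_of_factor_degree0 k (F : 'I_k -> divisor) (n : 'I_k -> int) j0 :
  n j0 != 0 -> (forall i, \sum_(j < k) n j * factor_degree (F j) i = 0) ->
  ~ cl_independent F.
Proof.
move=> nj0 deg0 indepF.
have principal_2n : principal (fun i c => \sum_(j < k) (2 * n j) * F j i c).
  have deg_nF i : factor_degree (fun i c => \sum_(j < k) n j * F j i c) i = 0.
    by rewrite factor_degree_sum deg0.
  apply: eq_principal (principal_double_of_factor_degree0 deg_nF) => i c.
  by rewrite /= big_distrr; apply: eq_bigr => j _; exact: mulrA.
by move/eqP: (indepF _ principal_2n j0); rewrite mulf_eq0 (negbTE nj0).
Qed.

Lemma big_ord2 (V : nmodType) (f : 'I_2 -> V) : \sum_(j < 2) f j = f ord0 + f ord_max.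
Proof. by rewrite big_ord_recr big_ord1; congr (f _ + _); exact: val_inj. Qed.

Lemma cyc3_orbit (i : 'I_3) : [\/ i = ord0, i = cyc3 ord0 | i = cyc3 (cyc3 ord0)].
Proof.
rewrite !permE; case: i => -[|[|[|//]]] lt_i3; [apply: Or31 | apply: Or32 | apply: Or33]; exact: val_inj.
Qed.

Lemma factor_degree_cyc3_invariant (D : divisor) i :
  lin_equiv (push gcyc D) D -> factor_degree D i = factor_degree D ord0.
Proof.
move=> invD; have degD j : factor_degree D (cyc3 j) = factor_degree D j.
  by rewrite -(factor_degree_lin_equiv (cyc3 j) invD) (factor_degree_push gcyc).
by case: (cyc3_orbit i) => ->; rewrite ?degD.
Qed.

Lemma invariant_anticanonical (S : GXhat -> Prop) : invariant_class S anticanonical.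
Proof. by move=> g _; exists (fun _ => 0); split=> [|i []]; rewrite ?big1 ?subrr. Qed.

Lemma cl_independent_anticanonical : cl_independent (fun _ : 'I_1 => anticanonical).
Proof.
move=> n /(factor_degree_principal ord0); rewrite factor_degree_sum big_ord1 => /eqP.
by rewrite mulf_eq0 => /orP[/eqP n0|//] j; rewrite ord1.
Qed.

Theorem corollary4p9 (S : GXhat -> Prop) :
  preimage_subgroup S -> contains_WA S -> rank_Cl_inv S 1.
Proof.
move=> _ [S_cyc _ _]; split.
  exists (fun _ => anticanonical); split; last exact: cl_independent_anticanonical.
  by move=> _; exact: invariant_anticanonical.
move=> F invF.
have deg_const j i : factor_degree (F j) i = factor_degree (F j) ord0.
  exact: factor_degree_cyc3_invariant (invF j gcyc S_cyc).
set d0 := factor_degree (F ord0) ord0; set d1 := factor_degree (F ord_max) ord0.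
have [/eqP d0_0 | d0_neq0] := boolP (d0 == 0).
  apply: (@cl_dependent_of_factor_degree0 _ _ (fun j => (j == ord0)%:R) ord0) => // i.
  by rewrite big_ord2 /= deg_const -/d0 d0_0 mulr0 mul0r addr0.
apply: (@cl_dependent_of_factor_degree0 _ _ (fun j => if j == ord0 then d1 else - d0) ord_max).
  by rewrite /= oppr_eq0.
by move=> i; rewrite big_ord2 /= !deg_const -/d0 -/d1 mulNr mulrC subrr.
Qed.
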